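(* Let $f:\mathbb{N}^d\to\mathbb{N}$. If there exists an increasing (in the componentwise order) sequence $(\vec{a}_1,\vec{a}_2,\ldots)$ of elements of $\mathbb{N}^d$ such that for all $i<j$ there exists some $\vec{\Delta}_{ij}\in\mathbb{N}^d$ with $f(\vec{a}_i+\vec{\Delta}_{ij})-f(\vec{a}_i)>f(\vec{a}_j+\vec{\Delta}_{ij})-f(\vec{a}_j)$, then $f$ is not obliviously-computable.
   Context: A chemical reaction network (CRN) is a pair $(\mathcal{S},\mathcal{R})$ of a finite set of species and a finite set of reactions $(\vec{R},\vec{P})\in\mathbb{N}^{\mathcal{S}}\times\mathbb{N}^{\mathcal{S}}$. A configuration is $\vec{C}\in\mathbb{N}^{\mathcal{S}}$; a reaction is applicable if $\vec{R}\le\vec{C}$ and yields $\vec{C}-\vec{R}+\vec{P}$; reachability is via finite sequences of applicable reactions. To compute $f:\mathbb{N}^d\to\mathbb{N}$ the CRN has input species $X_1,\ldots,X_d$, output species $Y$, leader species $L$; the initial configuration $\vec{I}_{\vec{x}}$ has $\vec{x}(i)$ copies of $X_i$, one $L$, nothing else. $\vec{C}$ is stable if all configurations reachable from it have the same count of $Y$. The CRN stably computes $f$ if for every $\vec{x}$ and every $\vec{C}$ reachable from $\vec{I}_{\vec{x}}$ some stable $\vec{O}$ reachable from $\vec{C}$ has $\vec{O}(Y)=f(\vec{x})$. The CRN is output-oblivious if $Y$ is never a reactant. $f$ is obliviously-computable if stably computed by an output-oblivious CRN. *)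

From Stdlib Require List.
From mathcomp Require Import all_boot all_algebra.
Set Implicit Arguments. Unset Strict Implicit. Unset Printing Implicit Defensive.

Definition config (S : finType) := S -> nat.

(* A reaction is a pair (reactants, products). *)
Definition reaction (S : finType) := (config S * config S)%type.

Record CRN (d : nat) (S : finType) := MkCRN {
  reactions : seq (reaction S);
  inp : 'I_d -> S;
  out : S;
  leader : S
}.

Definition cle (S : finType) (C D : config S) : Prop := forall s, C s <= D s.

Definition step d (S : finType) (N : CRN d S) (C D : config S) : Prop :=
  exists2 r, List.In r (reactions N) &
    cle r.1 C /\ D = (fun s => C s - r.1 s + r.2 s).

Inductive reachable d (S : finType) (N : CRN d S) : config S -> config S -> Prop :=
| reach_refl C : reachable N C C
| reach_step C D E : step N C D -> reachable N D E -> reachable N C E.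

Definition init d (S : finType) (N : CRN d S) (x : 'I_d -> nat) : config S :=
  fun s => (\sum_(i < d | inp N i == s) x i + (s == leader N))%N.

Definition io_distinct d (S : finType) (N : CRN d S) : Prop :=
  injective (inp N) /\ (forall i, inp N i <> out N) /\
  (forall i, inp N i <> leader N) /\ out N <> leader N.

Definition stable d (S : finType) (N : CRN d S) (C : config S) : Prop :=
  forall D1 D2, reachable N C D1 -> reachable N C D2 -> D1 (out N) = D2 (out N).

Definition stably_computes d (S : finType) (N : CRN d S) (f : ('I_d -> nat) -> nat)
  : Prop :=
  forall x C, reachable N (init N x) C ->
    exists O, [/\ reachable N C O, stable N O & O (out N) = f x].

Definition output_oblivious d (S : finType) (N : CRN d S) : Prop :=
  forall r, List.In r (reactions N) -> r.1 (out N) = 0%N.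

Definition obliviously_computable d (f : ('I_d -> nat) -> nat) : Prop :=
  exists (S : finType) (N : CRN d S),
    [/\ io_distinct N, output_oblivious N & stably_computes N f].

Definition vle d (a b : 'I_d -> nat) : Prop := forall i, a i <= b i.
Definition vadd d (a b : 'I_d -> nat) : 'I_d -> nat := fun i => (a i + b i)%N.

(** Fix an output-oblivious CRN stably computing f. From each initial
    configuration I_(a_i) it reaches some O_i whose Y-count is f(a_i). By
    Dickson's lemma O_i <= O_j for some i < j. Write I_D for the inputs D
    without the leader, so that I_(x + D) = I_x + I_D. Running from
    I_(a_j + D) first to O_j + I_D = (O_i + I_D) + (O_j - O_i), then along a
    run from O_i + I_D that produces f(a_i + D) copies of Y, the output can
    only grow since Y is never consumed; hence
    f(a_j + D) >= f(a_i + D) + f(a_j) - f(a_i), contradicting the choice of D. *)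

From mathcomp Require Import all_boot all_algebra.
From mathcomp Require Import zify.
From Stdlib Require Import ClassicalEpsilon FunctionalExtensionality.

Set Implicit Arguments.
Unset Strict Implicit.
Unset Printing Implicit Defensive.

Lemma exists_tail_argmin (h : nat -> nat) (m : nat) :
  exists n, m < n /\ forall k, m < k -> h n <= h k.
Proof.
suff below v n : m < n -> h n = v -> exists n, m < n /\ forall k, m < k -> h n <= h k.
  exact: (below _ m.+1 (ltnSn m) erefl).
elim/ltn_ind: v n => v IH n mn hn.
case: (classic (exists2 k, m < k & h k < h n)) => [[k mk hkn] | no_smaller].
  by apply: (IH (h k)) mk erefl; rewrite -hn.
exists n; split=> // k mk; rewrite leqNgt; apply/negP => hkn.
by apply: no_smaller; exists k.
Qed.

Lemma nondecreasing_subsequence (h : nat -> nat) :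
  exists2 psi : nat -> nat,
    {homo psi : m n / m < n} & {homo h \o psi : m n / m <= n}.
Proof.
have [next next_spec] := choice _ (exists_tail_argmin h).
pose psi k := iter k.+1 next 0.
have psi_lt k : psi k < psi k.+1 by case: (next_spec (psi k)).
exists psi; first exact: homo_ltn ltn_trans psi_lt.
apply: homo_leq leqnn leq_trans _ => k /=.
have [lt_prev tail_min] := next_spec (iter k next 0).
exact/tail_min/(ltn_trans lt_prev (psi_lt k)).
Qed.

Lemma dickson_subsequence (S : finType) (A : seq S) (g : nat -> config S) :
  exists2 phi : nat -> nat, {homo phi : m n / m < n} &
    forall s, s \in A -> {homo (fun k => g (phi k) s) : m n / m <= n}.
Proof.
elim: A => [|s A [phi phi_lt phi_le]]; first by exists id.
have [psi psi_lt psi_le] := nondecreasing_subsequence (fun k => g (phi k) s).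
exists (phi \o psi) => [m n mn | t]; first exact/phi_lt/psi_lt.
rewrite inE => /orP[/eqP -> // | tA] m n mn.
exact/(phi_le t tA)/ltnW_homo.
Qed.

Lemma dickson (S : finType) (g : nat -> config S) :
  exists i j, i < j /\ cle (g i) (g j).
Proof.
have [phi phi_lt phi_le] := dickson_subsequence (enum S) g.
exists (phi 0), (phi 1); split=> [|s]; first exact: phi_lt.
by apply: phi_le; rewrite ?mem_enum.
Qed.

Definition cadd (S : finType) (C D : config S) : config S := fun s => C s + D s.

Definition input_config d (S : finType) (N : CRN d S) (x : 'I_d -> nat) : config S :=
  fun s => \sum_(i < d | inp N i == s) x i.

Section Reachability.
Variables (d : nat) (S : finType) (N : CRN d S).

Lemma reachable_trans C D E : reachable N C D -> reachable N D E -> reachable N C E.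
Proof. by elim=> // C1 D1 E1 C1D1 _ IH /IH; exact: reach_step C1D1. Qed.

Lemma reachable_cadd C D E : reachable N C D -> reachable N (cadd C E) (cadd D E).
Proof.
elim=> [C1 | C1 D1 E1 [r r_in [r_le ->]] _ IH]; first exact: reach_refl.
apply: reach_step IH; exists r => //; split=> [s | ].
  by have := r_le s; rewrite /cadd; lia.
by apply: functional_extensionality => s; have := r_le s; rewrite /cadd; lia.
Qed.

Lemma reachable_out_le C D : output_oblivious N -> reachable N C D ->
  C (out N) <= D (out N).
Proof. by move=> oblivious; elim=> // C1 D1 E1 [r /oblivious r_out [_ ->]] _; lia. Qed.

Lemma init_vadd x D : init N (vadd x D) = cadd (init N x) (input_config N D).
Proof.
apply: functional_extensionality => s.
by rewrite /init /vadd /cadd /input_config big_split /=; lia.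
Qed.

Variable f : ('I_d -> nat) -> nat.
Hypotheses (oblivious : output_oblivious N) (computes : stably_computes N f).

Lemma stably_computes_increment_le x y D C C' :
  reachable N (init N x) C -> reachable N (init N y) C' -> cle C C' ->
  f (vadd x D) + C' (out N) <= f (vadd y D) + C (out N).
Proof.
move=> reach_C reach_C' CC'.
set I := input_config N D.
have reach_CI : reachable N (init N (vadd x D)) (cadd C I).
  by rewrite init_vadd; apply: reachable_cadd.
have [O [reach_O _ O_Y]] := computes reach_CI.
have split_C'I : cadd C' I = cadd (cadd C I) (fun s => C' s - C s).
  by apply: functional_extensionality => s; have := CC' s; rewrite /cadd; lia.
have reach_OC' : reachable N (init N (vadd y D)) (cadd O (fun s => C' s - C s)).
  apply: reachable_trans (_ : reachable N _ (cadd C' I)) _.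
    by rewrite init_vadd; apply: reachable_cadd.
  by rewrite split_C'I; apply: reachable_cadd.
have [O' [reach_O' _ O'_Y]] := computes reach_OC'.
have := reachable_out_le oblivious reach_O'.
by rewrite /cadd O_Y O'_Y; have := CC' (out N); lia.
Qed.

End Reachability.

Local Open Scope ring_scope.

Theorem lemma9 (d : nat) (f : ('I_d -> nat) -> nat) :
  (exists a : nat -> ('I_d -> nat),
     (forall i j : nat, (i < j)%N -> vle (a i) (a j)) /\
     (forall i j : nat, (i < j)%N ->
        exists D : 'I_d -> nat,
          (f (vadd (a i) D))%:Z - (f (a i))%:Z >
          (f (vadd (a j) D))%:Z - (f (a j))%:Z)) ->
  ~ obliviously_computable f.
Proof.
move=> [a [_ gap]] [S [N [_ oblivious computes]]].
have output_reached i : exists Oi,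
    reachable N (init N (a i)) Oi /\ Oi (out N) = f (a i).
  by have [Oi [reach_Oi _ Oi_Y]] := computes (a i) _ (reach_refl N _); exists Oi.
have [O O_spec] := choice _ output_reached.
have [i [j [ij O_le]]] := dickson O.
have [D gapD] := gap i j ij.
have [reach_i Oi_Y] := O_spec i; have [reach_j Oj_Y] := O_spec j.
have := stably_computes_increment_le oblivious computes D reach_i reach_j O_le.
by rewrite Oi_Y Oj_Y; move: gapD; lia.
Qed.
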